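(* Let $v\in T_1^\circ$ be a term of size $p$, let $\vec t=(t_1,\dots,t_p)$ be a sequence of terms of $T_1^*$, and let $t=v[\vec t]$. Then for every $\gamma\in B_\bullet$, $$t(\gamma)=t_1(\gamma)\cdot\partial t_2(\gamma)\cdot\ \cdots\ \cdot\partial^{p-1}t_p(\gamma)\cdot v(1).$$
   Context: $T_1^*$ (resp. $T_1^\circ$) is the set of terms in the single variable $x$ built using a binary operator $*$ (resp. $\circ$); the size of a term is its number of variable occurrences. $v[\vec t]$ is the term obtained from $v$ by substituting $t_1,\dots,t_p$ for the variable occurrences of $v$ enumerated from left to right. For a term $t$ and $\gamma\in B_\bullet$, $t(\gamma)$ is the evaluation of $t$ at $\gamma$ in $(B_\bullet,*,\circ)$, and $v(1)$ is the evaluation at the identity $1$. The group $B_\bullet$ is generated by $\sigma_1,\sigma_2,\dots$ and $a_1,a_2,\dots$ subject to: $\sigma_j\sigma_i=\sigma_i\sigma_j$ and $a_j\sigma_i=\sigma_ia_j$ for $j\ge i+2$; $a_j\sigma_i=\sigma_{i+1}a_j$ and $a_ja_i=a_{i+1}a_j$ for $j\le i-1$; $\sigma_j\sigma_i\sigma_j=\sigma_i\sigma_j\sigma_i$, $\sigma_i\sigma_ja_i=a_j\sigma_i$ and $\sigma_j\sigma_ia_j=a_i\sigma_i$ for $j=i+1$. $\partial$ is the endomorphism of $B_\bullet$ with $\partial\sigma_i=\sigma_{i+1}$, $\partial a_i=a_{i+1}$. The operations are $\beta*\gamma=\beta\cdot\partial\gamma\cdot\sigma_1\cdot\partial\beta^{-1}$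 and $\beta\circ\gamma=\beta\cdot\partial\gamma\cdot a_1$. *)

(* The group B_bullet is realized by its presentation:
   elements are words in the generators sigma_i, a_i and their inverses,
   and equality in B_bullet is the congruence [beq] generated by free
   cancellation and the defining relations.
   Indexing: [Sig i] stands for sigma_(i+1) and [Agen i] for a_(i+1)
   (0-based indices; the relations only depend on index differences). *)
From Stdlib Require Import List Arith.
Import ListNotations.

Inductive gen : Type := Sig (i : nat) | Agen (i : nat).

(* a letter: a generator together with an exponent flag (true = inverse) *)
Definition letter : Type := (gen * bool)%type.
Definition word : Type := list letter.

Definition g (x : gen) : word := [(x, false)].
Definition sig (i : nat) : word := g (Sig i).
Definition ag (i : nat) : word := g (Agen i).

Definition flip (l : letter) : letter := (fst l, negb (snd l)).
Definition winv (w : word) : word := rev (map flip w).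

Inductive rel : word -> word -> Prop :=
| rel_ss_far i j : i + 2 <= j -> rel (sig j ++ sig i) (sig i ++ sig j)
| rel_as_far i j : i + 2 <= j -> rel (ag j ++ sig i) (sig i ++ ag j)
| rel_as_shift i j : j + 1 <= i -> rel (ag j ++ sig i) (sig (S i) ++ ag j)
| rel_aa_shift i j : j + 1 <= i -> rel (ag j ++ ag i) (ag (S i) ++ ag j)
| rel_braid i : rel (sig (S i) ++ sig i ++ sig (S i)) (sig i ++ sig (S i) ++ sig i)
| rel_ssa i : rel (sig i ++ sig (S i) ++ ag i) (ag (S i) ++ sig i)
| rel_ssa' i : rel (sig (S i) ++ sig i ++ ag (S i)) (ag i ++ sig i).

Inductive beq : word -> word -> Prop :=
| beq_refl w : beq w w
| beq_sym u w : beq u w -> beq w u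
| beq_trans u v w : beq u v -> beq v w -> beq u w
| beq_free u l w : beq (u ++ [l; flip l] ++ w) (u ++ w)
| beq_rel u r1 r2 w : rel r1 r2 -> beq (u ++ r1 ++ w) (u ++ r2 ++ w).

Definition dgen (x : gen) : gen :=
  match x with Sig i => Sig (S i) | Agen i => Agen (S i) end.
Definition d (w : word) : word := map (fun l => (dgen (fst l), snd l)) w.
Definition dpow (k : nat) (w : word) : word := Nat.iter k d w.

Definition bstar (b c : word) : word := b ++ d c ++ sig 0 ++ d (winv b).
Definition bcirc (b c : word) : word := b ++ d c ++ ag 0.

Inductive term : Type :=
| Var : term
| Star : term -> term -> term
| Circ : term -> term -> term.

Fixpoint is_star (t : term) : Prop :=
  match t with Var => True | Star l r => is_star l /\ is_star r | Circ _ _ => False end.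
Fixpoint is_circ (t : term) : Prop :=
  match t with Var => True | Circ l r => is_circ l /\ is_circ r | Star _ _ => False end.

Fixpoint tsize (t : term) : nat :=
  match t with Var => 1 | Star l r | Circ l r => tsize l + tsize r end.

Fixpoint subst_aux (v : term) (ts : list term) : term * list term :=
  match v with
  | Var => match ts with t :: ts' => (t, ts') | [] => (Var, []) end
  | Star l r => let (l', ts1) := subst_aux l ts in
                let (r', ts2) := subst_aux r ts1 in (Star l' r', ts2)
  | Circ l r => let (l', ts1) := subst_aux l ts in
                let (r', ts2) := subst_aux r ts1 in (Circ l' r', ts2)
  end.
Definition subst (v : term) (ts : list term) : term := fst (subst_aux v ts).

Fixpoint eval (t : term) (gam : word) : word :=
  match t with
  | Var => gam
  | Star l r => bstar (eval l gam) (eval r gam)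
  | Circ l r => bcirc (eval l gam) (eval r gam)
  end.

Fixpoint dprod (k : nat) (ts : list term) (gam : word) : word :=
  match ts with
  | [] => []
  | t :: ts' => dpow k (eval t gam) ++ dprod (S k) ts' gam
  end.

(* In B_bullet, a_1 . d y = d^2 y . a_1 for every y: the relations
   a_1 sigma_i = sigma_(i+1) a_1 and a_1 a_i = a_(i+1) a_1 (i >= 2) move a_1
   across each letter of d y, shifting it once more.  By induction on v in
   T_1^o of size p this gives v(1) . d x = d^p x . v(1).  For v = l o r with
   l of size q, t(g) = l[t_1..t_q](g) . d r[t_(q+1)..t_p](g) . a_1; after
   expanding both factors by induction, that identity moves
   d (t_(q+1)(g) ... d^(p-q-1) t_p(g)) across l(1), turning it into
   d^q t_(q+1)(g) ... d^(p-1) t_p(g). *)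
From Stdlib Require Import List Arith Lia Setoid Morphisms.
Import ListNotations.

Add Parametric Relation : word beq
  reflexivity proved by beq_refl
  symmetry proved by beq_sym
  transitivity proved by beq_trans
  as beq_setoid.

Lemma beq_appr u u' w : beq u u' -> beq (u ++ w) (u' ++ w).
Proof.
  induction 1 as [| | |u l w0|u r1 r2 w0 Hr].
  - reflexivity.
  - now symmetry.
  - etransitivity; eassumption.
  - rewrite <- !app_assoc. apply beq_free.
  - rewrite <- !app_assoc. now apply beq_rel.
Qed.

Lemma beq_appl w u u' : beq u u' -> beq (w ++ u) (w ++ u').
Proof.
  induction 1 as [| | |u l w0|u r1 r2 w0 Hr].
  - reflexivity.
  - now symmetry.
  - etransitivity; eassumption.
  - rewrite !app_assoc, <- (app_assoc _ _ w0). apply beq_free.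
  - rewrite !app_assoc, <- !(app_assoc (w ++ u)). now apply beq_rel.
Qed.

Add Parametric Morphism : (@app letter) with signature beq ==> beq ==> beq
  as app_beq_morphism.
Proof.
  intros u u' Hu w w' Hw. transitivity (u' ++ w).
  - now apply beq_appr.
  - now apply beq_appl.
Qed.

Lemma flipK l : flip (flip l) = l.
Proof. destruct l as [x b]. unfold flip. simpl. now rewrite Bool.negb_involutive. Qed.

Lemma beq_cancel l : beq [l; flip l] [].
Proof. exact (beq_free [] l []). Qed.

Lemma beq_cancel_flip l : beq [flip l; l] [].
Proof. rewrite <- (flipK l) at 2. apply beq_cancel. Qed.

Lemma rel_beq r1 r2 : rel r1 r2 -> beq r1 r2.
Proof.
  intros Hr. pose proof (beq_rel [] r1 r2 [] Hr) as H.
  simpl in H. now rewrite !app_nil_r in H.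
Qed.

Lemma beq_commute_flip x l l' :
  beq (x ++ [l]) ([l'] ++ x) -> beq (x ++ [flip l]) ([flip l'] ++ x).
Proof.
  intros Hx.
  transitivity ([flip l'; l'] ++ x ++ [flip l]).
  { now rewrite beq_cancel_flip. }
  change ([flip l'; l'] ++ x ++ [flip l]) with ([flip l'] ++ ([l'] ++ x) ++ [flip l]).
  rewrite <- Hx, <- !app_assoc. change ([l] ++ [flip l]) with [l; flip l].
  now rewrite beq_cancel, app_nil_r.
Qed.

Lemma d_app a b : d (a ++ b) = d a ++ d b.
Proof. apply map_app. Qed.

Lemma dpow_app k a b : dpow k (a ++ b) = dpow k a ++ dpow k b.
Proof. induction k as [|k IH]; simpl; [reflexivity|]. now rewrite IH, d_app. Qed.

Lemma dpow_add k m x : dpow k (dpow m x) = dpow (k + m) x.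
Proof. unfold dpow. now rewrite Nat.iter_add. Qed.

Lemma rel_d r1 r2 : rel r1 r2 -> rel (d r1) (d r2).
Proof.
  destruct 1.
  - apply (rel_ss_far (S i) (S j)); lia.
  - apply (rel_as_far (S i) (S j)); lia.
  - apply (rel_as_shift (S i) (S j)); lia.
  - apply (rel_aa_shift (S i) (S j)); lia.
  - apply (rel_braid (S i)).
  - apply (rel_ssa (S i)).
  - apply (rel_ssa' (S i)).
Qed.

Add Parametric Morphism : d with signature beq ==> beq as d_beq_morphism.
Proof.
  induction 1 as [| | |u l w|u r1 r2 w Hr].
  - reflexivity.
  - now symmetry.
  - etransitivity; eassumption.
  - rewrite !d_app. apply (beq_free (d u) (dgen (fst l), snd l) (d w)).
  - rewrite !d_app. now apply beq_rel, rel_d.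
Qed.

Lemma ag0_dletter_comm (x : gen) :
  beq (ag 0 ++ [(dgen x, false)]) ([(dgen (dgen x), false)] ++ ag 0).
Proof.
  apply rel_beq. destruct x as [i|i].
  - exact (rel_as_shift (S i) 0 ltac:(lia)).
  - exact (rel_aa_shift (S i) 0 ltac:(lia)).
Qed.

Lemma ag0_d_comm y : beq (ag 0 ++ d y) (d (d y) ++ ag 0).
Proof.
  induction y as [|[x b] y IH]; [reflexivity|].
  change (d ((x, b) :: y)) with ([(dgen x, b)] ++ d y).
  change (d ([(dgen x, b)] ++ d y)) with ([(dgen (dgen x), b)] ++ d (d y)).
  rewrite app_assoc.
  assert (Hl : beq (ag 0 ++ [(dgen x, b)]) ([(dgen (dgen x), b)] ++ ag 0)).
  { destruct b.
    - exact (beq_commute_flip _ _ _ (ag0_dletter_comm x)).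
    - apply ag0_dletter_comm. }
  now rewrite Hl, <- !app_assoc, IH.
Qed.

Lemma eval_circ_one_d_comm v x : is_circ v ->
  beq (eval v [] ++ d x) (dpow (tsize v) x ++ eval v []).
Proof.
  revert x. induction v as [|l IHl r IHr|l IHl r IHr]; simpl; intros x Hv.
  - now rewrite app_nil_r.
  - destruct Hv.
  - destruct Hv as [Hl Hr]. unfold bcirc. rewrite <- !app_assoc, ag0_d_comm.
    rewrite (app_assoc (d (eval r []))), <- d_app, IHr by exact Hr.
    rewrite d_app, !app_assoc, IHl by exact Hl.
    now rewrite dpow_add, Nat.add_comm, <- !app_assoc.
Qed.

Lemma subst_aux_app v ts rest : length ts = tsize v ->
  subst_aux v (ts ++ rest) = (subst v ts, rest).
Proof.
  unfold subst. revert ts rest.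
  induction v as [|l IHl r IHr|l IHl r IHr]; simpl; intros ts rest Hlen.
  1: destruct ts as [|t [|]]; simpl in Hlen; try discriminate; reflexivity.
  all: rewrite <- (firstn_skipn (tsize l) ts), <- app_assoc.
  all: rewrite !IHl by (rewrite length_firstn; lia); simpl.
  all: rewrite <- (app_nil_r (skipn (tsize l) ts)) at 2.
  all: rewrite !IHr by (rewrite length_skipn; lia); reflexivity.
Qed.

Lemma subst_circ l r ts1 ts2 : length ts1 = tsize l -> length ts2 = tsize r ->
  subst (Circ l r) (ts1 ++ ts2) = Circ (subst l ts1) (subst r ts2).
Proof.
  intros H1 H2. unfold subst at 1. simpl.
  rewrite subst_aux_app by exact H1. cbn iota.
  rewrite <- (app_nil_r ts2) at 1. rewrite subst_aux_app by exact H2. reflexivity.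
Qed.

Lemma dprod_shift ts gam k : dprod k ts gam = dpow k (dprod 0 ts gam).
Proof.
  revert k. induction ts as [|t ts IH]; simpl; intros k.
  - induction k as [|k IHk]; simpl; now rewrite <- ?IHk.
  - now rewrite dpow_app, IH, (IH 1), !dpow_add, Nat.add_1_r.
Qed.

Lemma dprod_app ts1 ts2 gam k :
  dprod k (ts1 ++ ts2) gam = dprod k ts1 gam ++ dprod (k + length ts1) ts2 gam.
Proof.
  revert k. induction ts1 as [|t ts IH]; simpl; intros k.
  - now rewrite Nat.add_0_r.
  - now rewrite IH, app_assoc, Nat.add_succ_r.
Qed.

Lemma eval_subst_circ v ts gam : is_circ v -> length ts = tsize v ->
  beq (eval (subst v ts) gam) (dprod 0 ts gam ++ eval v []).
Proof.
  revert ts. induction v as [|l IHl r IHr|l IHl r IHr]; simpl; intros ts Hv Hlen.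
  - destruct ts as [|t [|]]; simpl in Hlen; try discriminate.
    unfold subst. simpl. now rewrite !app_nil_r.
  - destruct Hv.
  - destruct Hv as [Hl Hr].
    assert (H1 : length (firstn (tsize l) ts) = tsize l) by (rewrite length_firstn; lia).
    assert (H2 : length (skipn (tsize l) ts) = tsize r) by (rewrite length_skipn; lia).
    rewrite <- (firstn_skipn (tsize l) ts), subst_circ by assumption. simpl. unfold bcirc.
    rewrite IHl, IHr by assumption.
    rewrite dprod_app, H1, (dprod_shift _ _ (0 + _)), d_app, <- !app_assoc.
    rewrite (app_assoc (eval l [])), eval_circ_one_d_comm by exact Hl.
    now rewrite <- !app_assoc.
Qed.

Theorem lemma2p8 (v : term) (ts : list term) :
  is_circ v -> length ts = tsize v -> Forall is_star ts ->
  forall gam : word,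
    beq (eval (subst v ts) gam) (dprod 0 ts gam ++ eval v []).
Proof.
  intros Hv Hlen _ gam. now apply eval_subst_circ.
Qed.
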